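(* Let $\mathcal{A}$ be a finite alphabet with $\#\mathcal{A}\ge2$. For every irreducible pair $\mathbf{p}$ on $\mathcal{A}$, $d_{\mathrm{cycle}}(\mathbf{p},\mathrm{Std}(\mathcal{A}))\le\#\mathcal{A}-2$.
   Context: Let $n=\#\mathcal{A}$. A pair is $\mathbf{p}=(p_0,p_1)$ with $p_0,p_1:\mathcal{A}\to\{1,\dots,n\}$ bijections. Irreducible: $p_0^{-1}\{1,\dots,k\}\ne p_1^{-1}\{1,\dots,k\}$ for $1\le k<n$. Rauzy move of type $\varepsilon$: $\varepsilon\mathbf{p}=(p'_0,p'_1)$, $p'_\varepsilon=p_\varepsilon$, and for $z=p_\varepsilon^{-1}(n)$, $p'_{1-\varepsilon}(b)=p_{1-\varepsilon}(b)$ if $p_{1-\varepsilon}(b)\le p_{1-\varepsilon}(z)$, $=p_{1-\varepsilon}(b)+1$ if $p_{1-\varepsilon}(z)<p_{1-\varepsilon}(b)<n$, $=p_{1-\varepsilon}(z)+1$ if $p_{1-\varepsilon}(b)=n$. A Rauzy path is a sequence of Rauzy moves, written $\varepsilon_1^{k_1}\cdots\varepsilon_m^{k_m}$ with $k_i>0$ and $\varepsilon_{i+1}=1-\varepsilon_i$ (each $\varepsilon_i^{k_i}$ meaning $k_i$ consecutive moves of type $\varepsilon_i$); its cycle length is $m$. For pairs $\mathbf{p},\mathbf{p}'$ in the same Rauzy class, $d_{\mathrm{cycle}}(\mathbf{p},\mathbf{p}')=0$ if $\mathbf{p}=\mathbf{p}'$ and otherwise the minimum cycle length of a Rauzy path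 from $\mathbf{p}$ to $\mathbf{p}'$. $\mathrm{Std}(\mathcal{A})$ is the set of standard pairs, i.e. those with $p_0^{-1}(1)=p_1^{-1}(n)$ and $p_1^{-1}(1)=p_0^{-1}(n)$, and $d_{\mathrm{cycle}}(\mathbf{p},\mathrm{Std}(\mathcal{A}))$ is the minimum of $d_{\mathrm{cycle}}(\mathbf{p},\mathbf{q})$ over standard $\mathbf{q}$ reachable from $\mathbf{p}$ by Rauzy moves. *)

From mathcomp Require Import all_boot.
Set Implicit Arguments. Unset Strict Implicit. Unset Printing Implicit Defensive.

Section Rauzy.
Variable A : finType.

(* A pair p = (p_0, p_1), each p_e : A -> nat, intended to be bijections onto {1,...,#|A|}. *)
Definition rpair := ((A -> nat) * (A -> nat))%type.

Definition is_bij_onto (f : A -> nat) : Prop :=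
  injective f /\ (forall a, 1 <= f a <= #|A|) /\
  (forall k, 1 <= k <= #|A| -> exists a, f a = k).

Definition is_pair (p : rpair) : Prop := is_bij_onto p.1 /\ is_bij_onto p.2.

Definition irreducible (p : rpair) : Prop :=
  forall k, 1 <= k < #|A| -> [set a | p.1 a <= k] <> [set a | p.2 a <= k].

(* New "other" row: pe = p_eps (unchanged), po = p_{1-eps}; z = pe^{-1}(n). *)
Definition rauzy_other (pe po : A -> nat) : A -> nat :=
  match [pick z | pe z == #|A|] with
  | Some z => fun b =>
      if po b <= po z then po b
      else if po b < #|A| then (po b).+1
      else (po z).+1
  | None => po
  end.

(* Rauzy move of type eps: false = type 0, true = type 1. *)
Definition rauzy_move (eps : bool) (p : rpair) : rpair :=
  if eps then (rauzy_other p.2 p.1, p.2) else (p.1, rauzy_other p.1 p.2).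

Definition rauzy_path (s : seq bool) (p : rpair) : rpair :=
  foldl (fun q e => rauzy_move e q) p s.

(* cycle length: number of maximal blocks eps_i^{k_i} of the sequence of moves. *)
Definition cycle_length (s : seq bool) : nat :=
  match s with
  | [::] => 0
  | x :: t => (count id (pairmap (fun a b => a != b) x t)).+1
  end.

Definition pair_eq (p q : rpair) : Prop :=
  (forall a, p.1 a = q.1 a) /\ (forall a, p.2 a = q.2 a).

Definition standard (p : rpair) : Prop :=
  (forall a, p.1 a = 1 <-> p.2 a = #|A|) /\ (forall a, p.2 a = 1 <-> p.1 a = #|A|).

(* d_cycle(p, q) <= d, for q reachable from p:
   either p = q (distance 0) or some Rauzy path from p to q has cycle length <= d. *)
Definition dcycle_le (p q : rpair) (d : nat) : Prop :=
  pair_eq p q \/ exists s, pair_eq (rauzy_path s p) q /\ cycle_length s <= d.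

(* d_cycle(p, Std(A)) <= d : the minimum over standard q reachable from p is <= d,
   i.e. some standard q reachable from p has d_cycle(p,q) <= d. *)
Definition dcycle_std_le (p : rpair) (d : nat) : Prop :=
  exists q, (exists s, pair_eq (rauzy_path s p) q) /\ standard q /\ dcycle_le p q d.

End Rauzy.

(* Let t and b be the last letters of the top and bottom rows and c the position
   of t in the bottom row.  If c = 1, a single block of type-0 moves, pushing the
   first letter of the top row to the end of the bottom row, makes the pair
   standard.  Otherwise irreducibility at level c - 1 gives a letter x with
   p_0(x) < c < p_1(x); a block of type-0 moves brings x to the end of the bottom
   row without disturbing positions <= c, and after exchanging the rows (which
   exchanges the two move types) we are in the same situation with c replaced by
   p_0(x) < c.  By induction at most c blocks are needed, and c - 1 if b is first
   in the top row.  Doing this for p or for p with its rows exchanged gives at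
   most n - 2 blocks. *)

From mathcomp Require Import all_boot zify.
Set Implicit Arguments. Unset Strict Implicit. Unset Printing Implicit Defensive.

Lemma cycle_length_map_negb s : cycle_length (map negb s) = cycle_length s.
Proof.
case: s => [|x t] //=; congr S; congr count.
by elim: t x => [|y t IH] x //=; rewrite IH; case: x; case: y.
Qed.

Lemma cycle_length_nseq_cat k e s : cycle_length (nseq k e ++ s) <= (cycle_length s).+1.
Proof.
elim: k => [|[|k] IH]; first exact: leqnSn.
  by case: {IH} s => [|y s] //=; case: (e != y).
by move: IH; rewrite /= eqxx.
Qed.

Section RauzyClasses.
Variable A : finType.
Local Notation n := #|A|.
Implicit Types (p q : rpair A) (f g : A -> nat).

Definition swap_rows p : rpair A := (p.2, p.1).

Definition irreducible_below p c :=
  forall k, 1 <= k < c -> [set a | p.1 a <= k] <> [set a | p.2 a <= k].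

Definition reaches_std p d :=
  exists s, standard (rauzy_path s p) /\ cycle_length s <= d.

Lemma card_bij_sublevel f k : is_bij_onto f -> k <= n -> #|[set a | f a <= k]| = k.
Proof.
case=> Hi [Hr Hs]; elim: k => [|k IH] Hk.
  apply/eqP; rewrite cards_eq0; apply/eqP/setP => a; rewrite !inE.
  by have := Hr a; case: (f a).
have [a0 Ha0] : exists a0, f a0 = k.+1 by apply: Hs; lia.
have -> : [set a | f a <= k.+1] = a0 |: [set a | f a <= k].
  apply/setP => a; rewrite !inE; case: (eqVneq a a0) => [->|Ha]; first by rewrite Ha0 leqnn.
  have : f a != k.+1 by apply: contra_neq Ha => Hfa; apply: Hi; rewrite Hfa Ha0.
  by rewrite /=; lia.
by rewrite cardsU1 IH ?inE ?Ha0 ?ltnn //; lia.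
Qed.

Lemma bij_sublevel_cross f g k : is_bij_onto f -> is_bij_onto g -> k <= n ->
  [set a | f a <= k] <> [set a | g a <= k] -> exists x, f x <= k < g x.
Proof.
move=> Hf Hg Hk Hne.
have [/existsP [x /andP [Hx1 Hx2]]|/existsPn Hno] := boolP [exists x, (f x <= k) && (k < g x)].
  by exists x; apply/andP.
exfalso; apply: Hne; apply/eqP; rewrite eqEcard !card_bij_sublevel // leqnn andbT.
by apply/subsetP => a; rewrite !inE => Ha; move: (Hno a); rewrite Ha /= -leqNgt.
Qed.

Lemma bij_sublevel_eq f g c k : is_bij_onto f -> is_bij_onto g ->
  (forall y, f y <= c -> g y = f y) -> k <= c -> [set a | g a <= k] = [set a | f a <= k].
Proof.
move=> [_ [_ Hfs]] [Hgi [Hgr _]] Hfg Hk; apply/setP => a; rewrite !inE.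
case: (leqP (f a) c) => Ha; first by rewrite Hfg.
apply/idP/idP => H; last lia.
have [y Hy] : exists y, f y = g a by apply: Hfs; have := Hgr a; lia.
have Ey : g y = f y by apply: Hfg; lia.
have Eya : y = a by apply: Hgi; lia.
by subst; lia.
Qed.

Lemma is_bij_onto_insert f c : is_bij_onto f -> (exists t, f t = c) ->
  is_bij_onto (fun b => if f b <= c then f b else if f b < n then (f b).+1 else c.+1).
Proof.
case=> Hi [Hr Hs] [t Ht].
have Hc : 1 <= c <= n by rewrite -Ht.
set h := fun b => _.
have Hh b : (f b <= c /\ h b = f b) \/ (c < f b < n /\ h b = (f b).+1)
    \/ (f b = n /\ c < n /\ h b = c.+1).
  rewrite /h; have := Hr b.
  case: (leqP (f b) c) => Hx; [left|right]; first by [].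
  case: (ltnP (f b) n) => Hx'; [left|right]; lia.
split; [|split].
- move=> x y Hxy; apply: Hi; have := Hr x; have := Hr y.
  case: (Hh x) => [[? ?]|[[? ?]|[? [? ?]]]]; case: (Hh y) => [[? ?]|[[? ?]|[? [? ?]]]]; lia.
- by move=> x; have := Hr x; case: (Hh x) => [[? ?]|[[? ?]|[? [? ?]]]]; lia.
- move=> k Hk.
  have [a Ha] : exists a, f a = if k <= c then k else if k == c.+1 then n else k.-1.
    by apply: Hs; case: (leqP k c) => ? //; case: eqVneq => ? //; lia.
  exists a; move: Ha; case: (leqP k c) => ?; last case: eqVneq => ?;
    case: (Hh a) => [[? ?]|[[? ?]|[? [? ?]]]]; lia.
Qed.

Lemma rauzy_otherE (pe po : A -> nat) t : injective pe -> pe t = n ->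
  rauzy_other pe po =
    fun b => if po b <= po t then po b else if po b < n then (po b).+1 else (po t).+1.
Proof.
move=> Hi Ht; rewrite /rauzy_other; case: pickP => [z /eqP Hz|/(_ t)].
  by have -> : z = t by apply: Hi; rewrite Hz Ht.
by rewrite Ht eqxx.
Qed.

Lemma is_bij_onto_rauzy_other (pe po : A -> nat) :
  is_bij_onto po -> is_bij_onto (rauzy_other pe po).
Proof.
move=> Hpo; rewrite /rauzy_other; case: pickP => [z _|_] //.
by apply: is_bij_onto_insert => //; exists z.
Qed.

Lemma is_pair_rauzy_path s p : is_pair p -> is_pair (rauzy_path s p).
Proof.
elim: s p => [|[] s IH] [p1 p2] [H1 H2] //=; apply: IH; split => //;
  exact: is_bij_onto_rauzy_other.
Qed.

Lemma rauzy_path_nseq0_fst k p : (rauzy_path (nseq k false) p).1 = p.1.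
Proof. by elim: k p => [|k IH] p //=; rewrite IH. Qed.

Lemma rauzy_move0_snd p t y : injective p.1 -> p.1 t = n ->
  (rauzy_move false p).2 y =
    if p.2 y <= p.2 t then p.2 y else if p.2 y < n then (p.2 y).+1 else (p.2 t).+1.
Proof. by move=> Hi Ht; rewrite /= (rauzy_otherE _ Hi Ht). Qed.

Lemma rauzy_path_nseq0_snd_low k p t y : injective p.1 -> p.1 t = n ->
  p.2 y <= p.2 t -> (rauzy_path (nseq k false) p).2 y = p.2 y.
Proof.
elim: k p => [|k IH] p Hi Ht Hy //=.
by rewrite IH // !(rauzy_move0_snd _ Hi Ht) ?Hy ?leqnn.
Qed.

Lemma rauzy_path_nseq0_snd_high k p t y : injective p.1 -> p.1 t = n ->
  p.2 t < p.2 y -> p.2 y + k <= n -> (rauzy_path (nseq k false) p).2 y = p.2 y + k.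
Proof.
elim: k p => [|k IH] p Hi Ht Hy Hk; first by rewrite addn0.
have Ey : (rauzy_move false p).2 y = (p.2 y).+1.
  by rewrite (rauzy_move0_snd _ Hi Ht) leqNgt Hy ifT //; lia.
have Et : (rauzy_move false p).2 t = p.2 t by rewrite (rauzy_move0_snd _ Hi Ht) leqnn.
by rewrite [LHS](IH (rauzy_move false p)) // Ey ?Et; lia.
Qed.

Lemma rauzy_block_to_end p t x : is_pair p -> p.1 t = n -> p.2 t < p.2 x ->
  let q := rauzy_path (nseq (n - p.2 x) false) p in
  [/\ is_pair q, q.1 = p.1, q.2 x = n & forall y, p.2 y <= p.2 t -> q.2 y = p.2 y].
Proof.
move=> Hp Ht Hx q; have [[Hi _] [_ [Hr _]]] := Hp.
split; [exact: is_pair_rauzy_path | exact: rauzy_path_nseq0_fst | |].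
- by rewrite (rauzy_path_nseq0_snd_high Hi Ht Hx); have := Hr x; lia.
- by move=> y; apply: rauzy_path_nseq0_snd_low.
Qed.

Lemma rauzy_path_map_negb s p :
  rauzy_path (map negb s) p = swap_rows (rauzy_path s (swap_rows p)).
Proof. by elim: s p => [|[] s IH] [p1 p2]; rewrite /= ?IH. Qed.

Lemma is_pair_swap p : is_pair p -> is_pair (swap_rows p).
Proof. by case. Qed.

Lemma standard_swap p : standard p -> standard (swap_rows p).
Proof. by case. Qed.

Lemma irreducible_below_swap p c : irreducible_below p c -> irreducible_below (swap_rows p) c.
Proof. by move=> Hirr k Hk /esym; apply: Hirr. Qed.

Lemma irreducible_below_le p c c' : c <= c' -> irreducible_below p c' -> irreducible_below p c.
Proof. by move=> Hc Hirr k Hk; apply: Hirr; lia. Qed.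

Lemma standard_of_corners p a t : is_pair p ->
  p.1 a = 1 -> p.2 a = n -> p.1 t = n -> p.2 t = 1 -> standard p.
Proof.
move=> [[H1i _] [H2i _]] Ha1 Ha2 Ht1 Ht2; split => x; split => Hx.
- by have -> : x = a by apply: H1i; rewrite Hx Ha1.
- by have -> : x = a by apply: H2i; rewrite Hx Ha2.
- by have -> : x = t by apply: H2i; rewrite Hx Ht2.
- by have -> : x = t by apply: H1i; rewrite Hx Ht1.
Qed.

Lemma standard_reaches_std p : standard p -> reaches_std p 0.
Proof. by exists [::]. Qed.

Lemma reaches_std_le p d d' : reaches_std p d -> d <= d' -> reaches_std p d'.
Proof. by move=> [s [Hs Hl]] Hd; exists s; split => //; apply: leq_trans Hd. Qed.

Lemma reaches_std_swap p d : reaches_std (swap_rows p) d -> reaches_std p d.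
Proof.
case=> s [Hs Hl]; exists (map negb s).
by rewrite rauzy_path_map_negb cycle_length_map_negb; split => //; apply: standard_swap.
Qed.

Lemma reaches_std_nseq k e p d :
  reaches_std (rauzy_path (nseq k e) p) d -> reaches_std p d.+1.
Proof.
case=> s [Hs Hl]; exists (nseq k e ++ s); rewrite /rauzy_path foldl_cat.
by split => //; apply: leq_trans (cycle_length_nseq_cat k e s) _.
Qed.

Lemma reaches_std_corner p t : is_pair p -> p.1 t = n -> p.2 t = 1 -> reaches_std p 1.
Proof.
move=> Hp Ht Ht1; have [[H1i [H1r H1s]] [H2i [H2r _]]] := Hp.
have [a Ha] : exists a, p.1 a = 1 by apply: H1s; have := H1r t; lia.
have [Hna|Hna] := eqVneq (p.2 a) n.
  exact: reaches_std_le (standard_reaches_std (standard_of_corners Hp Ha Hna Ht Ht1)) _.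
have Hat : p.2 t < p.2 a.
  have [Eat|Hneq] := eqVneq a t; first by subst; lia.
  have : p.2 a != p.2 t by apply: contra_neq Hneq; apply: H2i.
  by have := H2r a; lia.
have [Hq Hq1 Hqa Hqlow] := rauzy_block_to_end Hp Ht Hat.
apply: reaches_std_nseq; apply: standard_reaches_std.
apply: (standard_of_corners (a := a) (t := t) Hq) => //; rewrite ?Hq1 //.
by rewrite Hqlow.
Qed.

Lemma irreducible_below_agree p q c : is_pair p -> is_pair q -> q.1 = p.1 ->
  (forall y, p.2 y <= c -> q.2 y = p.2 y) -> irreducible_below p c -> irreducible_below q c.
Proof.
move=> Hp Hq E1 E2 Hirr k Hk.
rewrite E1 (bij_sublevel_eq (proj2 Hp) (proj2 Hq) E2); [exact: Hirr | lia].
Qed.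

Lemma reaches_std_last_letters c p t b : is_pair p -> p.1 t = n -> p.2 b = n ->
  p.2 t = c -> irreducible_below p c -> reaches_std p (if p.1 b == 1 then c.-1 else c).
Proof.
elim/ltn_ind: c p t b => c IH p t b Hp Ht Hb Htc Hirr.
have [_ [H2i [H2r _]]] := Hp.
have Hc0 : 0 < c by rewrite -Htc; have := H2r t; lia.
have [Hb1|Hb1] := eqVneq (p.1 b) 1; rewrite ?Hb1 ?eqxx ?(negbTE Hb1).
  have [Hc|Hc] := eqVneq c 1.
    rewrite Hc; apply/standard_reaches_std/(standard_of_corners Hp Hb1 Hb Ht).
    by rewrite Htc.
  apply/reaches_std_swap/(reaches_std_le (reaches_std_corner (is_pair_swap Hp) Hb Hb1)).
  lia.
have [Hc|Hc] := eqVneq c 1; first by rewrite Hc; apply: reaches_std_corner Hp Ht _; lia.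
have [x /andP [Hx1 Hx2]] : exists x, p.1 x <= c.-1 < p.2 x.
  by apply: (bij_sublevel_cross (proj1 Hp) (proj2 Hp)); [|apply: Hirr]; have := H2r t; lia.
have Hxt : p.2 t < p.2 x.
  have Hneq : x != t by apply: contraTneq Hx1 => ->; rewrite Ht -ltnNge; have := H2r t; lia.
  have : p.2 x != p.2 t by apply: contra_neq Hneq; apply: H2i.
  lia.
have [Hq Hq1 Hqx Hqlow] := rauzy_block_to_end Hp Ht Hxt.
set q := rauzy_path _ p in Hq Hq1 Hqx Hqlow.
have Hqt : q.2 t = c by rewrite Hqlow.
have Hirrq : irreducible_below q c.
  by apply: irreducible_below_agree Hp Hq Hq1 _ Hirr => y Hy; rewrite Hqlow ?Htc.
have Hlt : p.1 x < c by lia.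
have Hrec := IH _ Hlt (swap_rows q) x t (is_pair_swap Hq) Hqx.
rewrite /= Hq1 Hqt (negbTE Hc) in Hrec.
rewrite -(prednK Hc0); apply/(reaches_std_nseq (k := n - p.2 x) (e := false))/reaches_std_swap.
apply: reaches_std_le (Hrec Ht erefl _) _; last lia.
exact: irreducible_below_swap (irreducible_below_le (ltnW Hlt) Hirrq).
Qed.

(* Applying the bound to [p] and to [p] with its rows exchanged leaves only the case
   where [t] and [b] both sit in position [n - 1] of the other row, which
   irreducibility at level [n - 2] excludes when [n >= 3]. *)
Lemma reaches_std_irreducible p : 2 <= n -> is_pair p -> irreducible p -> reaches_std p (n - 2).
Proof.
move=> Hn Hp Hirr; have [[H1i [H1r H1s]] [H2i [H2r H2s]]] := Hp.
have Hcross k : 1 <= k < n -> exists x, p.1 x <= k < p.2 x.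
  by move=> Hk; apply: (bij_sublevel_cross (proj1 Hp) (proj2 Hp)); [lia | exact: Hirr].
have [t Ht] : exists t, p.1 t = n by apply: H1s; lia.
have [b Hb] : exists b, p.2 b = n by apply: H2s; lia.
have Htb : t != b.
  have [x /andP [Hx1 Hx2]] := Hcross n.-1 ltac:(lia).
  have -> : b = x by apply: H2i; have := H2r x; lia.
  by apply: contraTneq Hx1 => <-; rewrite Ht; lia.
have Htn : p.2 t < n.
  have : p.2 t != p.2 b by apply: contra_neq Htb; apply: H2i.
  by have := H2r t; lia.
have Hbn : p.1 b < n.
  have : p.1 b != p.1 t by apply: contra_neq Htb => /H1i ->.
  by have := H1r b; lia.
have Hbound := reaches_std_last_letters Hp Ht Hb erefl (irreducible_below_le (ltnW Htn) Hirr).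
have [Htc|Htc] := leqP (p.2 t) (n - 2).
  by apply: reaches_std_le Hbound _; case: eqP => ?; lia.
have [Hbc|Hbc] := leqP (p.1 b) (n - 2).
  apply: reaches_std_swap; apply: reaches_std_le (reaches_std_last_letters (is_pair_swap Hp) Hb Ht
    (c := p.1 b) erefl (irreducible_below_swap (irreducible_below_le (ltnW Hbn) Hirr))) _.
  by case: eqP => ?; lia.
apply: reaches_std_le Hbound _; case: eqP => Hb1; first lia.
have [x /andP [Hx1 Hx2]] := Hcross (n - 2) ltac:(lia).
have Hxt : x != t by apply: contraTneq Hx1 => ->; lia.
have Hxb : x != b by apply: contraTneq Hx1 => ->; lia.
have : p.2 x != p.2 t by apply: contra_neq Hxt; apply: H2i.
have : p.2 x != p.2 b by apply: contra_neq Hxb; apply: H2i.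
by have := H2r x; lia.
Qed.

End RauzyClasses.

Theorem lemma2p26 (A : finType) (p : rpair A) :
  2 <= #|A| -> is_pair p -> irreducible p -> dcycle_std_le p (#|A| - 2).
Proof.
move=> Hn Hp Hirr; have [s [Hs Hl]] := reaches_std_irreducible Hn Hp Hirr.
by exists (rauzy_path s p); split; [exists s | split => //; right; exists s].
Qed.
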